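(* There is an absolute constant $c>0$ such that every sufficiently large positive integer $N$ can be written as $N=n_1+n_2$ with positive integers $n_1,n_2$ satisfying $F(n_i)\ge c\log N$ for $i=1,2$.
   Context: For a positive integer $n$, $F(n)$ denotes the distance from $n$ to the nearest prime number. *)

From mathcomp Require Import all_boot.
From Stdlib Require Import Reals.

Set Implicit Arguments.
Unset Strict Implicit.
Unset Printing Implicit Defensive.

Definition near_prime_at (n d : nat) : bool :=
  prime (n + d) || ((d <= n) && prime (n - d)).

Lemma near_prime_exists (n : nat) : exists d, near_prime_at n d.
Proof.
  have [p ltnp pp] := prime_above n.
  exists (p - n); rewrite /near_prime_at subnKC ?pp //.
  exact: ltnW.
Qed.

(* F n = distance from n to the nearest prime = min_{p prime} |n - p|. *)
Definition F (n : nat) : nat := ex_minn (near_prime_exists n).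

From mathcomp Require Import all_boot zify.
From Stdlib Require Import Reals Lra.
(* Reals rebinds [^] on nat to Nat.pow; restore ssrnat's [expn] notation. *)
Import ssrnat.

(* Every prime in (n, 2n] divides 'C(2n, n) <= 4^n, so there are at most
   2n / log2 n of them; summing over dyadic blocks gives Chebyshev's bound
   pi(x) = O(x / log x).  Call n bad if F n < D or F (N - n) < D.  Each prime
   p < N + D makes at most 2D values of n bad through n and 2D through N - n,
   so at most 4 D pi(N + D) = O(D N / log N) of the N - 1 splits N = n + (N - n)
   are bad; for D a small multiple of log N some split is good. *)

Lemma prime_dvd_fact p k : prime p -> (p %| k`!) = (p <= k).
Proof.
move=> pp; apply/idP/idP => [|pk]; last by rewrite dvdn_fact ?prime_gt0.
elim: k => [|k IH]; first by rewrite Euclid_dvd1.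
by rewrite factS Euclid_dvdM // => /orP[/dvdn_leq -> | /IH /leqW].
Qed.

Lemma prime_dvd_bin_half n p : prime p -> n < p <= n.*2 -> p %| 'C(n.*2, n).
Proof.
move=> pp /andP[np p2n].
have p_coprime_fact : coprime p (n`! * n`!).
  by rewrite coprimeMr prime_coprime // prime_dvd_fact // -ltnNge np.
rewrite -(Gauss_dvdl _ p_coprime_fact) -addnn.
have := bin_fact (leq_addr n n); rewrite addnK => ->.
by rewrite prime_dvd_fact // addnn.
Qed.

Lemma bin_leq_exp2 n k : 'C(n, k) <= 2 ^ n.
Proof.
elim: n k => [|n IH] [|k] //; first by rewrite bin0 expn_gt0.
by rewrite binS expnS mul2n -addnn leq_add.
Qed.

Lemma prod_primes_dvdn (s : seq nat) m :
  uniq s -> all prime s -> all (dvdn^~ m) s -> \prod_(p <- s) p %| m.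
Proof.
elim: s => [|p s IH] /=; first by rewrite big_nil dvd1n.
case/andP=> p_s us /andP[pp prs] /andP[pm sm].
rewrite big_cons Gauss_dvd ?pm ?IH // prime_coprime // Euclid_dvd_prod //.
rewrite big_seq big1 // => q qs.
by rewrite dvdn_prime2 ?(allP prs q qs) //; apply: (contraNF _ p_s) => /eqP->.
Qed.

Lemma expn_count_primes_le n : n ^ count prime (iota n.+1 n) <= 4 ^ n.
Proof.
set s := filter prime (iota n.+1 n); rewrite -size_filter -/s.
have n_le_prod : n ^ size s <= \prod_(p <- s) p.
  rewrite -count_predT -iter_muln_1 -big_const_seq big_seq [X in _ <= X]big_seq.
  by apply: leq_prod => p; rewrite mem_filter mem_iota => /andP[_ /andP[/ltnW]].
have prod_dvd : \prod_(p <- s) p %| 'C(n.*2, n).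
  apply: prod_primes_dvdn; [exact/filter_uniq/iota_uniq | exact: filter_all |].
  apply/allP => p; rewrite mem_filter mem_iota => /andP[pp hp].
  by apply: prime_dvd_bin_half => //; lia.
apply: (leq_trans n_le_prod); apply: (leq_trans (dvdn_leq _ prod_dvd)).
  by rewrite bin_gt0 -addnn leq_addr.
by rewrite (_ : 4 = 2 ^ 2) // -expnM mul2n bin_leq_exp2.
Qed.

Definition prime_pi x := count prime (iota 1 x).

Lemma prime_pi_le x : prime_pi x <= x.
Proof. by rewrite -[leqRHS](size_iota 1) count_size. Qed.

Lemma prime_pi_homo : {homo prime_pi : x y / x <= y}.
Proof. by move=> x y /subnKC <-; rewrite /prime_pi iotaD count_cat leq_addr. Qed.

Lemma prime_pi_double x : prime_pi x.*2 = prime_pi x + count prime (iota x.+1 x).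
Proof. by rewrite /prime_pi -addnn iotaD count_cat add1n. Qed.

Lemma count_primes_dyadic j : j * count prime (iota (2 ^ j).+1 (2 ^ j)) <= 2 ^ j.+1.
Proof.
have := expn_count_primes_le (2 ^ j).
by rewrite -expnM (_ : 4 = 2 ^ 2) // -expnM leq_exp2l // -expnS.
Qed.

Lemma prime_pi_dyadic s t : s * prime_pi (2 ^ (s + t)) <= s * 2 ^ s + 2 ^ (s + t).+1.
Proof.
elim: t => [|t IH].
  by rewrite addn0 (leq_trans _ (leq_addr _ _)) // leq_mul2l prime_pi_le orbT.
have := count_primes_dyadic (s + t).
have := leq_mul (leq_addr t s) (leqnn (count prime (iota (2 ^ (s + t)).+1 (2 ^ (s + t))))).
rewrite addnS !expnS mul2n prime_pi_double -mul2n in IH *.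
lia.
Qed.

Lemma prime_pi_pow2 m : m * prime_pi (2 ^ m) <= 9 * 2 ^ m.
Proof.
have [m_le1 | m_gt1] := leqP m 1; first by case: m m_le1 => [|[]].
set s := m./2.
have m_eq : odd m + s.*2 = m := odd_double_half m.
have := prime_pi_dyadic s (m - s); rewrite subnKC; last by lia.
have s_le : s * 2 ^ s <= 2 ^ m.
  rewrite (leq_trans (leq_mul (ltnW (ltn_expl s (ltnSn 1))) (leqnn _))) //.
  by rewrite -expnD leq_exp2l //; lia.
have m_le : m <= 3 * s by lia.
have := leq_mul m_le (leqnn (prime_pi (2 ^ m))).
rewrite expnS; lia.
Qed.

Definition within D m p := (m < p + D) && (p < m + D).

Lemma F_lt_has_within D n X :
  n + D <= X -> F n < D -> has (within D n) (filter prime (iota 1 X)).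
Proof.
rewrite /F; case: ex_minnP => d + _ nDX dD; rewrite /near_prime_at.
case/orP => [pp | /andP[dn pp]]; apply/hasP.
- exists (n + d); last by rewrite /within; lia.
  by rewrite mem_filter pp mem_iota; have := prime_gt0 pp; lia.
- exists (n - d); last by rewrite /within; lia.
  by rewrite mem_filter pp mem_iota; have := prime_gt0 pp; lia.
Qed.

Lemma count_has_le (I J : Type) (P : I -> J -> bool) (s : seq I) (ps : seq J) w :
  (forall p, count (P^~ p) s <= w) -> count (fun n => has (P n) ps) s <= size ps * w.
Proof.
move=> Pw; elim: ps => [|p ps IH] /=; first by rewrite count_pred0.
rewrite mulSn (leq_trans _ (leq_add (Pw p) IH)) //.
by rewrite -count_predUI leq_addr.
Qed.

Lemma count_le_window (a : pred nat) s lo w :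
  uniq s -> {in s, forall n, a n -> lo <= n < lo + w} -> count a s <= w.
Proof.
move=> us a_lo; rewrite -size_filter -[w](size_iota lo).
apply: uniq_leq_size; first exact: filter_uniq.
by move=> n; rewrite mem_filter mem_iota => /andP[an ns]; apply: a_lo.
Qed.

Lemma exists_split_far_from_primes N D :
  4 * D * prime_pi (N + D) < N.-1 ->
  exists2 n, 0 < n < N & (D <= F n) && (D <= F (N - n)).
Proof.
move=> few_primes.
set s := iota 1 N.-1; set ps := filter prime (iota 1 (N + D)).
set near_n := fun n => has (within D n) ps.
set near_Nn := fun n => has (within D (N - n)) ps.
set bad := fun n => (F n < D) || (F (N - n) < D).
have size_ps : size ps = prime_pi (N + D) by rewrite size_filter.
have near_n_le : count near_n s <= prime_pi (N + D) * D.*2.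
  rewrite -size_ps; apply: count_has_le => p.
  apply: (@count_le_window _ _ (p - D)); first exact: iota_uniq.
  by move=> n _; rewrite /within; lia.
have near_Nn_le : count near_Nn s <= prime_pi (N + D) * D.*2.
  rewrite -size_ps; apply: count_has_le => p.
  apply: (@count_le_window _ _ (N - p - D)); first exact: iota_uniq.
  by move=> n; rewrite mem_iota /within; lia.
have bad_near : count bad s = count (predI bad (predU near_n near_Nn)) s.
  apply: eq_in_count => n; rewrite mem_iota => n_range /=.
  apply/esym/andb_idr; rewrite /bad => /orP[Fn | FNn]; apply/orP; [left | right].
    by apply: F_lt_has_within => //; lia.
  by apply: F_lt_has_within => //; lia.
have bad_le : count bad s <= 4 * D * prime_pi (N + D).
  have := count_predUI near_n near_Nn s.
  have : count (predI bad (predU near_n near_Nn)) s <= count (predU near_n near_Nn) s.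
    by apply: sub_count => n /andP[].
  lia.
have : has (predC bad) s.
  by rewrite has_count; have := count_predC bad s; rewrite size_iota; lia.
case/hasP => n; rewrite mem_iota /bad /= negb_or -!leqNgt => n_range /andP[DFn DFNn].
by exists n; [lia | rewrite DFn DFNn].
Qed.

Lemma exists_split_far_from_primes_log N : 2 ^ 400 <= N ->
  exists2 n, 0 < n < N &
    (trunc_log 2 N %/ 256 <= F n) && (trunc_log 2 N %/ 256 <= F (N - n)).
Proof.
move=> N_large; set K := trunc_log 2 N; set D := K %/ 256; set X := 2 ^ K.
have N_ge : X <= N by apply: trunc_logP => //; rewrite (leq_trans _ N_large) ?expn_gt0.
have N_lt : N < 2 * X by rewrite -expnS; apply: trunc_log_ltn.
have K_ge : 400 <= K by apply: trunc_log_max.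
have X_ge : 8 <= X by rewrite (@leq_exp2l 2 3 K) //; lia.
have K_lt : K < X by apply: ltn_expl.
have pi_le : (K + 2) * prime_pi (N + D) <= 36 * X.
  have pi_N : prime_pi (N + D) <= prime_pi (2 ^ (K + 2)).
    by apply: prime_pi_homo; rewrite expnD -/X /D; lia.
  apply: leq_trans (leq_mul (leqnn _) pi_N) _.
  by have := prime_pi_pow2 (K + 2); rewrite expnD -/X; lia.
apply: exists_split_far_from_primes.
rewrite -(@ltn_pmul2l (256 * (K + 2))) ?muln_gt0 ?addn_gt0 ?orbT //.
have D_le : 256 * D <= K by rewrite /D; lia.
have := leq_mul (leqnn 4) (leq_mul D_le pi_le).
have := leq_mul (leqnn K) X_ge; have := leq_mul (leqnn K) N_ge.
nia.
Qed.

Lemma INR_exp2_le_exp m : (INR (2 ^ m) <= exp (INR m))%R.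
Proof.
elim: m => [|m IH]; first by rewrite /= exp_0; lra.
have e_gt2 : (2 < exp 1)%R by have := exp_ineq1 1 R1_neq_R0; lra.
rewrite expnS -multE mult_INR (S_INR m) exp_plus /=.
by have := pos_INR (2 ^ m); have := exp_pos (INR m); nra.
Qed.

Lemma ln_lt_trunc_log2 N : 0 < N -> (ln (INR N) < INR (trunc_log 2 N).+1)%R.
Proof.
move=> N_gt0; rewrite -[X in (_ < X)%R]ln_exp.
apply: ln_increasing; first exact/lt_0_INR/ltP.
apply: (Rlt_le_trans _ (INR (2 ^ (trunc_log 2 N).+1))); last exact: INR_exp2_le_exp.
exact/lt_INR/ltP/trunc_log_ltn.
Qed.

Theorem proposition1 :
  exists c : R, (0 < c)%R /\
    exists N0 : nat, forall N : nat, (N0 <= N)%N -> (0 < N)%N ->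
      exists n1 n2 : nat,
        (0 < n1)%N /\ (0 < n2)%N /\ N = (n1 + n2)%N /\
        (c * ln (INR N) <= INR (F n1))%R /\
        (c * ln (INR N) <= INR (F n2))%R.
Proof.
exists (/ 1024)%R; split; first lra.
exists (2 ^ 400) => N N_large N_gt0.
have [n /andP[n_gt0 n_lt] /andP[Fn FNn]] := exists_split_far_from_primes_log N N_large.
set K := trunc_log 2 N in Fn FNn.
have c_ln_le : (/ 1024 * ln (INR N) <= INR (K %/ 256))%R.
  have := ln_lt_trunc_log2 N N_gt0; rewrite -/K S_INR.
  have /leP/le_INR : 400 <= K by apply: trunc_log_max.
  have /leP/le_INR : K <= 256 * (K %/ 256) + 255 by lia.
  rewrite plus_INR mult_INR !(INR_IZR_INZ 400, INR_IZR_INZ 256, INR_IZR_INZ 255).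
  rewrite [Z.of_nat 400]/= [Z.of_nat 256]/= [Z.of_nat 255]/=; lra.
exists n, (N - n); do 3?split; [done | lia | lia |].
by split; apply: (Rle_trans _ _ _ c_ln_le); apply/le_INR/leP.
Qed.
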